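(* Let $\mathbf{\Omega}\subset\mathbb{R}^n$ be a finite set, let $f:\mathbf{\Omega}\to\mathbb{R}$, and let $\lambda=\sum_{\mathbf{v}\in\mathbf{\Omega}}\delta_{\mathbf{v}}$ be the counting measure on $\mathbf{\Omega}$. Let $\underline{f}=\min_{\mathbf{\Omega}}f$, $\overline{f}=\max_{\mathbf{\Omega}}f$, $\mathcal{Z}=\{f(\mathbf{v}):\mathbf{v}\in\mathbf{\Omega}\}$ and $\bar r=\mathrm{card}(\mathcal{Z})-1$. Let $\#\lambda$ be the pushforward of $\lambda$ by $f$, with moments $\#\lambda_k=\sum_{\mathbf{v}\in\mathbf{\Omega}}f(\mathbf{v})^k$, and for $r\in\mathbb{N}$ let $\mathbf{H}_r(\#\lambda)$ and $\mathbf{H}_r(x;\#\lambda)$ be the $(r+1)\times(r+1)$ Hankel matrices with $(i,j)$ entries $\#\lambda_{i+j}$ and $\#\lambda_{i+j+1}$ respectively ($i,j=0,\dots,r$), and \[\tau^\ell_r=\sup_a\{a:\ \mathbf{H}_r(x;\#\lambda)\succeq a\,\mathbf{H}_r(\#\lambda)\},\qquad \tau^u_r=\inf_a\{a:\ a\,\mathbf{H}_r(\#\lambda)\succeq \mathbf{H}_r(x;\#\lambda)\}.\] Then $\tau^\ell_{\bar r}=\underline{f}$ and $\tau^u_{\bar r}=\overline{f}$.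
   Context: $\delta_{\mathbf{v}}$ is the Dirac measure at $\mathbf{v}$. The pushforward is $\#\lambda(C)=\lambda(f^{-1}(C))$. $\mathbf{A}\succeq\mathbf{B}$ means $\mathbf{A}-\mathbf{B}$ is positive semidefinite. *)

From HB Require Import structures.
From mathcomp Require Import all_boot all_order all_algebra.
From mathcomp Require Import boolp classical_sets reals.
Set Implicit Arguments. Unset Strict Implicit. Unset Printing Implicit Defensive.
Import Order.TTheory GRing.Theory Num.Theory.
Local Open Scope ring_scope.

Section Defs.
Variables (R : realType) (n : nat).
Implicit Types (Omega : seq 'rV[R]_n) (f : 'rV[R]_n -> R).

Definition pmoment Omega f (k : nat) : R := \sum_(v <- Omega) f v ^+ k.

Definition hankel Omega f (r : nat) : 'M[R]_(r.+1) :=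
  \matrix_(i < r.+1, j < r.+1) pmoment Omega f (i + j)%N.

Definition hankel_x Omega f (r : nat) : 'M[R]_(r.+1) :=
  \matrix_(i < r.+1, j < r.+1) pmoment Omega f (i + j).+1.

End Defs.

Definition psd (R : realType) (m : nat) (A : 'M[R]_m) : Prop :=
  forall x : 'cV[R]_m, 0 <= ((x^T *m A *m x) 0 0).

Definition tau_l (R : realType) (n : nat) (Omega : seq 'rV[R]_n)
  (f : 'rV[R]_n -> R) (r : nat) : R :=
  sup [set a : R | psd (hankel_x Omega f r - a *: hankel Omega f r)]%classic.

Definition tau_u (R : realType) (n : nat) (Omega : seq 'rV[R]_n)
  (f : 'rV[R]_n -> R) (r : nat) : R :=
  inf [set a : R | psd (a *: hankel Omega f r - hankel_x Omega f r)]%classic.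

Definition rbar (R : realType) (n : nat) (Omega : seq 'rV[R]_n)
  (f : 'rV[R]_n -> R) : nat := (size (undup (map f Omega))).-1.

Definition fmin (R : realType) (n : nat) (Omega : seq 'rV[R]_n)
  (f : 'rV[R]_n -> R) : R :=
  \big[Num.min/f (head 0 Omega)]_(v <- Omega) f v.
Definition fmax (R : realType) (n : nat) (Omega : seq 'rV[R]_n)
  (f : 'rV[R]_n -> R) : R :=
  \big[Num.max/f (head 0 Omega)]_(v <- Omega) f v.

(* For a weight [g], let [L_r(g)] be the Hankel matrix with entries
   [sum_(v in Omega) g(f v) f(v)^(i+j)]; its quadratic form at a vector [x] is
   [sum_v g(f v) p_x(f v)^2], where [p_x] is the polynomial with coefficients
   [x].  Hence [L_r(g)] is PSD when [g >= 0] on [f(Omega)].  Conversely, for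
   [r = rbar] and a value [z] of [f], the product of the [X - w] over the other
   [rbar] values [w] of [f] is an admissible [p_x], and it kills every term
   with [f v <> z], forcing [g z >= 0].  As [H_r(x) - a H_r = L_r(t - a)] and
   [a H_r - H_r(x) = L_r(a - t)], the feasible [a] for [tau^l] are exactly the
   lower bounds of [f] on [Omega], and those for [tau^u] the upper bounds. *)
From HB Require Import structures.
From mathcomp Require Import all_boot all_order all_algebra.
From mathcomp Require Import ring.
From mathcomp Require Import boolp classical_sets reals real_interval.
Set Implicit Arguments. Unset Strict Implicit. Unset Printing Implicit Defensive.
Import Order.TTheory GRing.Theory Num.Theory.
Local Open Scope ring_scope.

Lemma exists_poly_roots_except (R : idomainType) (s : seq R) (z : R) :
  z \in s ->
  exists p : {poly R},
    (size p <= size s)%N /\ {in s, forall w, root p w = (w != z)}.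
Proof.
move=> zs; exists (\prod_(w <- [seq w <- s | w != z]) ('X - w%:P)); split.
- rewrite size_prod_XsubC size_filter -(count_predC (fun w => w != z) s).
  by rewrite -addn1 leq_add2l -has_count; apply/hasP; exists z => //=; rewrite negbK.
- by move=> w ws; rewrite root_prod_XsubC mem_filter ws andbT.
Qed.

Section LocalizingHankel.
Variables (R : realType) (n : nat) (Omega : seq 'rV[R]_n) (f : 'rV[R]_n -> R).

Definition loc_hankel (g : R -> R) (r : nat) : 'M[R]_r.+1 :=
  \matrix_(i < r.+1, j < r.+1) \sum_(v <- Omega) g (f v) * f v ^+ (i + j).

Lemma loc_hankel_quadE g r (x : 'cV[R]_r.+1) :
  (x^T *m loc_hankel g r *m x) 0 0 =
  \sum_(v <- Omega) g (f v) * (\sum_(i < r.+1) x i 0 * f v ^+ i) ^+ 2.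
Proof.
rewrite mxE; under eq_bigr do rewrite mxE big_distrl /=.
under eq_bigr do under eq_bigr do rewrite !mxE big_distrr big_distrl /=.
under [RHS]eq_bigr do rewrite expr2 big_distrl big_distrr /=.
under [RHS]eq_bigr do under eq_bigr do rewrite big_distrr big_distrr /=.
under eq_bigr do rewrite exchange_big /=.
rewrite exchange_big; apply: eq_bigr => v _.
apply: eq_bigr => i _; apply: eq_bigr => j _.
by rewrite exprD; ring.
Qed.

Lemma psd_loc_hankel g r :
  {in Omega, forall v, 0 <= g (f v)} -> psd (loc_hankel g r).
Proof.
move=> g_ge0 x; rewrite loc_hankel_quadE big_seq.
by apply: sumr_ge0 => v vO; rewrite mulr_ge0 ?g_ge0 ?sqr_ge0.
Qed.

Lemma psd_loc_hankel_rbar_ge0 g :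
  psd (loc_hankel g (rbar Omega f)) -> {in Omega, forall v, 0 <= g (f v)}.
Proof.
move=> g_psd v0 v0O; set z := f v0.
have zZ : z \in undup (map f Omega) by rewrite mem_undup map_f.
have [p [size_p root_p]] := exists_poly_roots_except zZ.
have size_p_rbar : (size p <= (rbar Omega f).+1)%N.
  by rewrite /rbar prednK // -has_predT; apply/hasP; exists z.
have pE v :
    \sum_(i < (rbar Omega f).+1) (\col_i p`_i : 'cV_ _) i 0 * f v ^+ i = p.[f v].
  by rewrite (horner_coef_wide _ size_p_rbar); apply: eq_bigr => i _; rewrite mxE.
have localize v : v \in Omega ->
    g (f v) * p.[f v] ^+ 2 = if f v == z then g z * p.[z] ^+ 2 else 0.
  move=> vO; case: eqP => [-> // | /eqP fvz].
  have /rootP-> : root p (f v) by rewrite root_p ?mem_undup ?map_f.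
  by rewrite expr0n mulr0.
have := g_psd (\col_i p`_i); rewrite loc_hankel_quadE.
under eq_bigr do rewrite pE.
rewrite big_seq (eq_bigr _ localize) -big_seq -big_mkcond big_const_seq iter_addr_0.
rewrite pmulrn_lge0; last by rewrite -has_count; apply/hasP; exists v0.
have /rootPf pz_neq0 : ~~ root p z by rewrite root_p // negbK.
by rewrite pmulr_lge0 // exprn_even_gt0 // pz_neq0.
Qed.

Lemma psd_loc_hankel_rbarP g :
  psd (loc_hankel g (rbar Omega f)) <-> {in Omega, forall v, 0 <= g (f v)}.
Proof. by split; [exact: psd_loc_hankel_rbar_ge0 | exact: psd_loc_hankel]. Qed.

Lemma hankel_xBZE a r :
  hankel_x Omega f r - a *: hankel Omega f r = loc_hankel (fun t => t - a) r.
Proof.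
apply/matrixP => i j; rewrite !mxE /pmoment mulr_sumr -sumrB.
by apply: eq_bigr => v _; rewrite exprS; ring.
Qed.

Lemma hankelZBxE a r :
  a *: hankel Omega f r - hankel_x Omega f r = loc_hankel (fun t => a - t) r.
Proof.
apply/matrixP => i j; rewrite !mxE /pmoment mulr_sumr -sumrB.
by apply: eq_bigr => v _; rewrite exprS; ring.
Qed.

Hypothesis Omega_neq0 : Omega != [::].

Let head_in : head 0 Omega \in Omega.
Proof. by case: Omega Omega_neq0 => // v s _; rewrite mem_head. Qed.

Lemma le_fminP a : reflect {in Omega, forall v, a <= f v} (a <= fmin Omega f).
Proof.
apply: (iffP idP) => [a_le v vO | a_lb].
  by rewrite (le_trans a_le) // ge_bigmin_seq.
by rewrite /fmin big_seq le_bigmin ?a_lb ?head_in // => v /a_lb.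
Qed.

Lemma fmax_geP a : reflect {in Omega, forall v, f v <= a} (fmax Omega f <= a).
Proof.
apply: (iffP idP) => [le_a v vO | a_ub].
  by rewrite (le_trans _ le_a) // le_bigmax_seq.
by rewrite /fmax big_seq bigmax_le ?a_ub ?head_in // => v /a_ub.
Qed.

Lemma tau_l_setE :
  [set a : R | psd (hankel_x Omega f (rbar Omega f)
                    - a *: hankel Omega f (rbar Omega f))]%classic
  = `]-oo, fmin Omega f]%classic.
Proof.
apply/seteqP; split => a /=; rewrite in_itv /= hankel_xBZE psd_loc_hankel_rbarP.
  by move=> a_lb; apply/le_fminP => v /a_lb; rewrite subr_ge0.
by move=> /le_fminP a_lb v /a_lb; rewrite subr_ge0.
Qed.

Lemma tau_u_setE :
  [set a : R | psd (a *: hankel Omega f (rbar Omega f)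
                    - hankel_x Omega f (rbar Omega f))]%classic
  = `[fmax Omega f, +oo[%classic.
Proof.
apply/seteqP; split => a /=; rewrite in_itv /= andbT hankelZBxE psd_loc_hankel_rbarP.
  by move=> a_ub; apply/fmax_geP => v /a_ub; rewrite subr_ge0.
by move=> /fmax_geP a_ub v /a_ub; rewrite subr_ge0.
Qed.

End LocalizingHankel.

Theorem lemma2p4 (R : realType) (n : nat) (Omega : seq 'rV[R]_n)
  (f : 'rV[R]_n -> R) :
  uniq Omega -> Omega != [::] ->
  tau_l Omega f (rbar Omega f) = fmin Omega f /\
  tau_u Omega f (rbar Omega f) = fmax Omega f.
Proof.
(* The moments only see [Omega] as a multiset. *)
move=> _ Omega_neq0.
by rewrite /tau_l /tau_u tau_l_setE // tau_u_setE // sup_itv // inf_itv.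
Qed.
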